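(* Let $A$ be a Banach lattice algebra. Then $BP_l(A)\cap BP_r(A)\subseteq BP(A)$, and the sets $BP(A)$, $BP_l(A)$, $BP_r(A)$ are norm closed. If moreover $A$ has an identity $e$, then $BP_l(A)=OI(A)=BP_r(A)$; in particular $OI(A)\subseteq BP(A)$.
   Context: A Banach lattice algebra is a real Banach lattice $A$ with an associative bilinear product making it a Banach algebra such that $xy\ge0$ whenever $x,y\ge0$; identity $e$ means a multiplicative identity with $\|e\|=1$. $L_a(x)=ax$, $R_a(x)=xa$. A band projection on a Banach lattice $X$ is an operator $P$ with $P^2=P$, $0\le P\le I_X$. $BP(A)=\{a\in A_+: L_aR_a\text{ is a band projection}\}$, $BP_l(A)=\{a\in A_+: L_a\text{ is a band projection}\}$, $BP_r(A)=\{a\in A_+: R_a\text{ is a band projection}\}$, $OI(A)=\{p: p^2=p,\ 0\le p\le e\}$. *)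

From HB Require Import structures.
From mathcomp Require Import all_boot all_order all_algebra.
From mathcomp Require Import all_classical all_reals all_analysis.
Set Implicit Arguments. Unset Strict Implicit. Unset Printing Implicit Defensive.
Import Order.TTheory GRing.Theory Num.Theory.
Import numFieldNormedType.Exports.
Local Open Scope classical_set_scope.
Local Open Scope ring_scope.

Section BLA.
Variables (R : realType) (V : completeNormedModType R).
Variables (le : V -> V -> Prop) (join : V -> V -> V) (mul : V -> V -> V).

Definition vector_lattice : Prop :=
  [/\ [/\ (forall x, le x x),
      (forall x y, le x y -> le y x -> x = y) &
      (forall x y z, le x y -> le y z -> le x z)],
      (forall x y z, le x y -> le (x + z) (y + z)),
      (forall (a : R) x y, 0 <= a -> le x y -> le (a *: x) (a *: y)) &
      (forall x y, [/\ le x (join x y), le y (join x y) &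
                    forall z, le x z -> le y z -> le (join x y) z])].

Definition labs (x : V) : V := join x (- x).

(* Banach lattice: completeness comes from the type V *)
Definition banach_lattice : Prop :=
  vector_lattice /\ (forall x y, le (labs x) (labs y) -> `|x| <= `|y|).

Definition banach_lattice_algebra : Prop :=
  [/\ banach_lattice,
      (forall x y z, mul x (mul y z) = mul (mul x y) z),
      [/\
      (forall x y z, mul (x + y) z = mul x z + mul y z),
      (forall x y z, mul x (y + z) = mul x y + mul x z) &
      (forall (a : R) x y, mul (a *: x) y = a *: mul x y /\ mul x (a *: y) = a *: mul x y)],
      (forall x y, `|mul x y| <= `|x| * `|y|) &
      (forall x y, le 0 x -> le 0 y -> le 0 (mul x y))].

Definition is_identity (e : V) : Prop :=
  (forall x, mul e x = x /\ mul x e = x) /\ `|e| = 1.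

Definition band_projection (P : V -> V) : Prop :=
  [/\ (forall x y, P (x + y) = P x + P y),
      (forall (a : R) x, P (a *: x) = a *: P x),
      (forall x, P (P x) = P x) &
      (forall x, le 0 x -> le 0 (P x) /\ le (P x) x)].

Definition Lmul (a : V) : V -> V := fun x => mul a x.
Definition Rmul (a : V) : V -> V := fun x => mul x a.

Definition BP : set V :=
  [set a | le 0 a /\ band_projection (Lmul a \o Rmul a)].
Definition BPl : set V := [set a | le 0 a /\ band_projection (Lmul a)].
Definition BPr : set V := [set a | le 0 a /\ band_projection (Rmul a)].
Definition OI (e : V) : set V :=
  [set p | mul p p = p /\ le 0 p /\ le p e].

End BLA.

From HB Require Import structures.
From mathcomp Require Import all_boot all_order all_algebra.
From mathcomp Require Import all_classical all_reals all_analysis.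
Import Order.TTheory GRing.Theory Num.Theory.
Import numFieldNormedType.Exports.
Local Open Scope classical_set_scope.
Local Open Scope ring_scope.

(* Each defining condition of BP, BPl and BPr is closed in the element [a], because
   multiplication is jointly continuous and the positive cone is closed.  Since
   [L_a] and [R_a] commute by associativity, [L_a R_a] is a band projection when
   both factors are.  With an identity [e], one first shows [e >= 0]; then [L_p] is
   a band projection iff [p] is an idempotent between [0] and [e], and the right
   version follows by reversing the multiplication. *)

Lemma archi_mulrn_le1_eq0 (R : archiRealFieldType) (x : R) :
  0 <= x -> (forall n, x *+ n <= 1) -> x = 0.
Proof.
rewrite le_eqVlt => /predU1P[<- //|x_gt0] x_bnd.
have /archi_boundP : 0 <= x^-1 by rewrite invr_ge0 ltW.
by rewrite -(ltr_pM2l x_gt0) mulfV ?gt_eqF // mulr_natr ltNge x_bnd.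
Qed.

Lemma closure_sub_closed (T : topologicalType) (A C : set T) :
  closed C -> A `<=` C -> closure A `<=` C.
Proof. by move=> /closure_id CE AC; rewrite [X in _ `<=` X]CE; exact: closureS. Qed.

Lemma continuous_id (T : topologicalType) : continuous (fun x : T => x).
Proof. by move=> x; exact: cvg_id. Qed.

Section BanachLatticeAlgebra.
Context {R : realType} {V : completeNormedModType R}.
Context {le : V -> V -> Prop} {join : V -> V -> V} {mul : V -> V -> V}.
Hypothesis bla : banach_lattice_algebra le join mul.

Ltac bla_axioms :=
  move: bla; rewrite /banach_lattice_algebra /banach_lattice /vector_lattice
  => -[[[[ax_refl ax_anti ax_trans] ax_addr ax_scale ax_join] ax_norm]
       ax_mulA [ax_mulDl ax_mulDr ax_mulZ] ax_mul_norm ax_mul_ge0].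

Let vle_refl x : le x x. Proof. by bla_axioms. Qed.
Let vle_anti x y : le x y -> le y x -> x = y. Proof. by bla_axioms; exact: ax_anti. Qed.
Let vle_trans {x y z} : le x y -> le y z -> le x z. Proof. by bla_axioms; exact: ax_trans. Qed.
Let vleD2r z x y : le x y -> le (x + z) (y + z). Proof. by bla_axioms; exact: ax_addr. Qed.
Let vleZ2l (a : R) x y : 0 <= a -> le x y -> le (a *: x) (a *: y).
Proof. by bla_axioms; exact: ax_scale. Qed.
Let vjoin_spec x y : [/\ le x (join x y), le y (join x y) &
  forall z, le x z -> le y z -> le (join x y) z].
Proof. by bla_axioms. Qed.
Let vnorm_mono_labs x y : le (labs join x) (labs join y) -> `|x| <= `|y|.
Proof. by bla_axioms; exact: ax_norm. Qed.
Let vmulA x y z : mul x (mul y z) = mul (mul x y) z. Proof. by bla_axioms. Qed.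
Let vmulDl x y z : mul (x + y) z = mul x z + mul y z. Proof. by bla_axioms. Qed.
Let vmulDr x y z : mul x (y + z) = mul x y + mul x z. Proof. by bla_axioms. Qed.
Let vmulZl (a : R) x y : mul (a *: x) y = a *: mul x y.
Proof. by bla_axioms; case: (ax_mulZ a x y). Qed.
Let vmulZr (a : R) x y : mul x (a *: y) = a *: mul x y.
Proof. by bla_axioms; case: (ax_mulZ a x y). Qed.
Let vnorm_mul x y : `|mul x y| <= `|x| * `|y|. Proof. by bla_axioms. Qed.
Let vmul_ge0 x y : le 0 x -> le 0 y -> le 0 (mul x y). Proof. by bla_axioms; exact: ax_mul_ge0. Qed.

Lemma vsubr_ge0 x y : le 0 (y - x) <-> le x y.
Proof.
split=> [/(vleD2r x)|/(vleD2r (- x))]; first by rewrite add0r subrK.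
by rewrite subrr.
Qed.

Lemma vleD2l z x y : le x y -> le (z + x) (z + y).
Proof. by rewrite ![z + _]addrC; exact: vleD2r. Qed.

Lemma vleD x y x' y' : le x y -> le x' y' -> le (x + x') (y + y').
Proof. by move=> /(vleD2r x') le_xy /(vleD2l y); exact: vle_trans. Qed.

Lemma vmulrn_ge0 x n : le 0 x -> le 0 (x *+ n).
Proof.
move=> x_ge0; elim: n => [|n IHn]; first by rewrite mulr0n.
by rewrite mulrS -[0]addr0; exact: vleD.
Qed.

Lemma vjoin_l x y : le y x -> join x y = x.
Proof. by case: (vjoin_spec x y) => le_x _ join_le le_yx; apply: vle_anti => //; exact: join_le. Qed.

Lemma vopp_le0 {x} : le 0 x -> le (- x) 0.
Proof. by move=> x_ge0; apply/vsubr_ge0; rewrite sub0r opprK. Qed.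

Lemma labs_ge0 x : le 0 (labs join x).
Proof.
have halfK : (2 : R)^-1 *: (labs join x *+ 2) = labs join x.
  by rewrite -[labs join x *+ 2]scaler_nat scalerA mulVf ?pnatr_eq0 // scale1r.
rewrite -halfK -(scaler0 _ (2 : R)^-1); apply: vleZ2l; first by rewrite invr_ge0.
by case: (vjoin_spec x (- x)) => le_x le_Nx _; rewrite mulr2n -(subrr x); exact: vleD.
Qed.

Lemma labs_id {x} : le 0 x -> labs join x = x.
Proof. by move=> x_ge0; rewrite /labs vjoin_l //; exact: vle_trans (vopp_le0 x_ge0) x_ge0. Qed.

Lemma norm_labs x : `|labs join x| = `|x|.
Proof.
have labsK := labs_id (labs_ge0 x).
by apply/eqP; rewrite eq_le !vnorm_mono_labs // labsK.
Qed.

Lemma vnorm_mono x y : le 0 x -> le x y -> `|x| <= `|y|.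
Proof. by move=> x_ge0 le_xy; apply: vnorm_mono_labs; rewrite !labs_id //; exact: vle_trans le_xy. Qed.

(* The negative part [join (- x) 0] of [x] has norm at most the distance from [x]
   to the positive cone. *)
Lemma closed_vge0 : closed [set x | le 0 x].
Proof.
move=> x x_cl; set y := join (- x) 0.
have [le_Nx_y y_ge0 _] := vjoin_spec (- x) 0.
have dist_cone : closure [set p | le 0 p] `<=` [set p | `|y| <= `|p - x|].
  apply: closure_sub_closed.
    apply: (@preimage_closed _ _ (fun p => `|p - x|) [set r | `|y| <= r]); last exact: closed_ge.
    move=> p _.
    by apply: cvg_norm; apply: cvgB; [exact: cvg_id | exact: cvg_cst].
  move=> p p_ge0; rewrite /= -[`|p - x|]norm_labs; apply: vnorm_mono => //.
  have [le_labs _ _] := vjoin_spec (p - x) (- (p - x)).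
  case: (vjoin_spec (- x) 0) => _ _; apply; last exact: labs_ge0.
  by apply: vle_trans le_labs; rewrite -[X in le X _]add0r; exact: vleD2r.
have /dist_cone := x_cl; rewrite /= subrr normr0 normr_le0 => /eqP y0.
by move: le_Nx_y; rewrite -/y y0 => /vsubr_ge0; rewrite sub0r opprK.
Qed.

Lemma vmulNl x y : mul (- x) y = - mul x y.
Proof. by rewrite -scaleN1r vmulZl scaleN1r. Qed.

Lemma vmulNr x y : mul x (- y) = - mul x y.
Proof. by rewrite -scaleN1r vmulZr scaleN1r. Qed.

Lemma vmulBl x y z : mul (x - y) z = mul x z - mul y z.
Proof. by rewrite vmulDl vmulNl. Qed.

Lemma vmulBr x y z : mul x (y - z) = mul x y - mul x z.
Proof. by rewrite vmulDr vmulNr. Qed.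

Lemma vmul_le2l {c x y} : le 0 c -> le x y -> le (mul c x) (mul c y).
Proof. by move=> c_ge0 /vsubr_ge0 le_xy; apply/vsubr_ge0; rewrite -vmulBr; exact: vmul_ge0. Qed.

Lemma vmul_le2r {c x y} : le 0 c -> le x y -> le (mul x c) (mul y c).
Proof. by move=> c_ge0 /vsubr_ge0 le_xy; apply/vsubr_ge0; rewrite -vmulBl; exact: vmul_ge0. Qed.

Lemma cvg_vmul T (F : set_system T) (FF : Filter F) (f g : T -> V) x y :
  f @ F --> x -> g @ F --> y -> (fun t => mul (f t) (g t)) @ F --> mul x y.
Proof.
move=> /cvgrPdist_lt f_cvg /cvgrPdist_lt g_cvg; apply/cvgrPdist_lt => e e_gt0.
set M := `|x| + 1 + `|y|.
have M_gt0 : 0 < M by rewrite ltr_wpDr // ltr_wpDl.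
set d := Num.min 1 (e / M).
have d_gt0 : 0 < d by rewrite lt_min ltr01 divr_gt0.
have d_le1 : d <= 1 by rewrite ge_min lexx.
have dM_le : d * M <= e by rewrite -ler_pdivlMr // ge_min lexx orbT.
apply: filterS2 (f_cvg d d_gt0) (g_cvg d d_gt0) => t dist_f dist_g.
have ft_le : `|f t| <= `|x| + 1.
  rewrite -[f t](subKr x); apply: le_trans (ler_normB _ _) _.
  by rewrite lerD2l (le_trans (ltW dist_f)).
have -> : mul x y - mul (f t) (g t) = mul (x - f t) y + mul (f t) (y - g t).
  by rewrite vmulBl vmulBr addrA subrK.
apply: le_lt_trans (ler_normD _ _) (le_lt_trans _ (lt_le_trans _ dM_le)).
- exact: lerD (vnorm_mul _ _) (vnorm_mul _ _).
- rewrite /M mulrDr [X in _ < X]addrC; apply: ler_ltD.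
    by rewrite ler_wpM2r // ltW.
  apply: le_lt_trans (ler_wpM2r (normr_ge0 _) ft_le) _.
  by rewrite [X in _ < X]mulrC ltr_pM2l // ltr_wpDl.
Qed.

Lemma continuous_vmul {f g : V -> V} :
  continuous f -> continuous g -> continuous (fun a => mul (f a) (g a)).
Proof. by move=> f_cont g_cont a; apply: cvg_vmul; [exact: f_cont | exact: g_cont]. Qed.

Lemma closed_vge0_preimage (f : V -> V) : continuous f -> closed [set a | le 0 (f a)].
Proof. by move=> f_cont; apply: (preimage_closed (D := [set x | le 0 x])) closed_vge0 => a _. Qed.

Lemma closed_veq (f g : V -> V) : continuous f -> continuous g -> closed [set a | f a = g a].
Proof.
move=> f_cont g_cont.
have -> : [set a | f a = g a] = [set a | le 0 (f a - g a)] `&` [set a | le 0 (g a - f a)].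
  apply/seteqP; split=> a /=; first by move=> ->; rewrite subrr.
  by move=> [/vsubr_ge0 le_gf /vsubr_ge0 le_fg]; exact: vle_anti.
by apply: closedI; apply: closed_vge0_preimage => a; apply: cvgB;
  [exact: f_cont | exact: g_cont | exact: g_cont | exact: f_cont].
Qed.

Lemma closed_band_projection_family (T : V -> V -> V) :
  (forall x, continuous (fun a => T a x)) ->
  (forall x, continuous (fun a => T a (T a x))) ->
  (forall a x y, T a (x + y) = T a x + T a y) ->
  (forall a (c : R) x, T a (c *: x) = c *: T a x) ->
  closed [set a | le 0 a /\ band_projection le (T a)].
Proof.
move=> T_cont TT_cont TD TZ a a_cl.
have closure_in (C : set V) :
    closed C -> (forall b, le 0 b /\ band_projection le (T b) -> C b) -> C a.
  by move=> C_closed sub; exact: closure_sub_closed C_closed sub _ a_cl.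
split; first by apply: closure_in closed_vge0 _ => b [].
split=> // [x|x x_ge0].
  apply: (closure_in [set b | T b (T b x) = T b x]); first exact: closed_veq.
  by move=> b [_ [_ _ T_idem _]]; exact: T_idem.
split.
  apply: (closure_in [set b | le 0 (T b x)]); first exact: closed_vge0_preimage.
  by move=> b [_ [_ _ _ /(_ x x_ge0) []]].
apply/vsubr_ge0; apply: (closure_in [set b | le 0 (x - T b x)]).
  apply: (@closed_vge0_preimage (fun b => x - T b x)) => b.
  exact: cvgB (cvg_cst x) (T_cont x b).
by move=> b [_ [_ _ _ /(_ x x_ge0) [_ /vsubr_ge0]]].
Qed.

Ltac vcontinuity :=
  by repeat first [apply: continuous_vmul | exact: continuous_id | exact: cst_continuous].

Lemma closed_BPl : closed (BPl le mul).
Proof.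
apply: closed_band_projection_family => [x|x|a x y|a c x]; rewrite /Lmul.
1,2: vcontinuity.
- exact: vmulDr.
- exact: vmulZr.
Qed.

Lemma closed_BP : closed (BP le mul).
Proof.
apply: closed_band_projection_family => [x|x|a x y|a c x]; rewrite /Lmul /Rmul /=.
1,2: vcontinuity.
- by rewrite vmulDl vmulDr.
- by rewrite vmulZl vmulZr.
Qed.

Lemma BPlI_BPr_sub_BP : BPl le mul `&` BPr le mul `<=` BP le mul.
Proof.
move=> a [[a_ge0 [_ _ L_idem L_band]] [_ [_ _ R_idem R_band]]]; split=> //; split.
- by move=> x y; rewrite /= /Lmul /Rmul vmulDl vmulDr.
- by move=> c x; rewrite /= /Lmul /Rmul vmulZl vmulZr.
- move=> x; rewrite /Lmul /Rmul /= in L_idem R_idem *.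
  by rewrite [mul a (mul x a)]vmulA R_idem -vmulA L_idem.
- move=> x x_ge0; have [Rx_ge0 le_Rx] := R_band x x_ge0.
  by have [LRx_ge0 le_LRx] := L_band _ Rx_ge0; split=> //; exact: vle_trans le_LRx le_Rx.
Qed.

(* With [a = |e|] and [w = a - e >= 0] one gets [a^(n+1) >= a + n w >= n w] while
   [|a^(n+1)| <= |a|^(n+1) = 1], so [n |w| <= 1] for every [n]. *)
Lemma identity_ge0 {e} : is_identity mul e -> le 0 e.
Proof.
move=> [e_id e_norm]; set a := labs join e; set w := a - e.
have a_ge0 : le 0 a := labs_ge0 e.
have w_ge0 : le 0 w by apply/vsubr_ge0; case: (vjoin_spec e (- e)).
have mul_aE z : mul a z = z + mul w z by rewrite -{1}(subrK e a) -/w vmulDl (e_id z).1 addrC.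
pose pow n := iter n (mul a) a.
have pow_norm n : `|pow n| <= 1.
  elim: n => [|n IHn]; first by rewrite /pow /= norm_labs e_norm.
  rewrite /pow iterS -/(pow n); apply: le_trans (vnorm_mul _ _) _.
  by rewrite norm_labs e_norm mul1r.
have pow_ge n : le (a + w *+ n) (pow n).
  elim: n => [|n IHn]; first by rewrite mulr0n addr0.
  have le_a_pow : le a (pow n).
    by apply: vle_trans IHn; rewrite -[X in le X _]addr0; apply: vleD2l; exact: vmulrn_ge0.
  have le_w_mul : le w (mul w (pow n)).
    apply: vle_trans _ (vmul_le2l w_ge0 le_a_pow).
    rewrite -[X in mul w X](subrK e a) -/w vmulDr (e_id w).2.
    by rewrite addrC -[X in le X _]addr0; apply: vleD2l; exact: vmul_ge0.
  by rewrite /pow iterS -/(pow n) mul_aE mulrSr addrA; exact: vleD.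
have w0 : w = 0.
  apply/normr0_eq0/archi_mulrn_le1_eq0 => [|n]; first exact: normr_ge0.
  rewrite -normrMn; apply: le_trans (pow_norm n); apply: vnorm_mono; first exact: vmulrn_ge0.
  by apply: vle_trans (pow_ge n); rewrite -[X in le X _]add0r; exact: vleD2r.
by rewrite -(subrK e a) -/w w0 add0r in a_ge0.
Qed.

Lemma BPl_eq_OI {e} : is_identity mul e -> BPl le mul = OI le mul e.
Proof.
move=> e_ident; have e_ge0 := identity_ge0 e_ident; case: e_ident => e_id _.
apply/seteqP; split=> p.
- move=> [p_ge0 [_ _ L_idem L_band]]; rewrite /Lmul in L_idem L_band.
  have [_ le_pe] := L_band e e_ge0; have pp := L_idem e.
  by rewrite (e_id p).2 in le_pe pp.
- move=> [pp [p_ge0 le_pe]]; split=> //; split; rewrite /Lmul.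
  + by move=> x y; rewrite vmulDr.
  + by move=> c x; rewrite vmulZr.
  + by move=> x; rewrite vmulA pp.
  + move=> x x_ge0; split; first exact: vmul_ge0.
    by rewrite -[X in le _ X](e_id x).1; apply: vmul_le2r.
Qed.

End BanachLatticeAlgebra.

Lemma banach_lattice_algebra_rev {R : realType} {V : completeNormedModType R}
    {le : V -> V -> Prop} {join mul : V -> V -> V} :
  banach_lattice_algebra le join mul -> banach_lattice_algebra le join (fun x y => mul y x).
Proof.
case=> bl mulA [mulDl mulDr mulZ] mul_norm mul_ge0; split=> //.
- split=> [x y z|x y z|a x y]; first exact: mulDr; first exact: mulDl.
  by case: (mulZ a y x).
- by move=> x y; rewrite mulrC.
- by move=> x y x_ge0 y_ge0; exact: mul_ge0.
Qed.

Lemma is_identity_rev {R : realType} {V : completeNormedModType R} {mul : V -> V -> V} {e : V} :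
  is_identity mul e -> is_identity (fun x y => mul y x) e.
Proof. by move=> [e_id e_norm]; split=> // x; case: (e_id x). Qed.

Theorem mainTheorem18 (R : realType) (V : completeNormedModType R)
  (le : V -> V -> Prop) (join : V -> V -> V) (mul : V -> V -> V) :
  banach_lattice_algebra le join mul ->
  [/\ BPl le mul `&` BPr le mul `<=` BP le mul,
      closed (BP le mul), closed (BPl le mul), closed (BPr le mul) &
      forall e : V, is_identity mul e ->
        [/\ BPl le mul = OI le mul e, OI le mul e = BPr le mul &
            OI le mul e `<=` BP le mul]].
Proof.
move=> bla; have bla_rev := banach_lattice_algebra_rev bla.
have BP_sub := BPlI_BPr_sub_BP bla.
split=> //.
- exact: closed_BP bla.
- exact: closed_BPl bla.
- exact: closed_BPl bla_rev.
- move=> e e_ident; have BPl_OI := BPl_eq_OI bla e_ident.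
  have BPr_OI : BPr le mul = OI le mul e := BPl_eq_OI bla_rev (is_identity_rev e_ident).
  split=> //; rewrite -BPl_OI => p BPl_p; apply: BP_sub; split=> //.
  by rewrite BPr_OI -BPl_OI.
Qed.
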